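(* Let $d\ge3$, $\beta>0$, $g:\mathbb{R}^d\to\mathbb{R}$ Lipschitz. There are positive constants $C_1,C_2$ depending only on $d,\beta,g$ such that for any $\varepsilon>0$, $t\in\mathbb{Z}_{\ge0}$ and $x,y\in\mathbb{Z}^d$, \[ |G_\varepsilon(t,x)-G_\varepsilon(t,y)|\le C_1\varepsilon|x-y|e^{C_2(\varepsilon|x|+\varepsilon|y|+\varepsilon^2t)}. \]
   Context: $\{S_n\}_{n\ge0}$ is simple symmetric random walk on $\mathbb{Z}^d$ started at the origin; $g_\varepsilon(x)=g(\varepsilon x)$ and $G_\varepsilon(t,x)=\mathbb{E}(e^{\beta g_\varepsilon(S_t+x)})$ for $t\in\mathbb{Z}_{\ge0}$, $x\in\mathbb{Z}^d$. *)

From mathcomp Require Import all_boot all_order all_algebra.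
From mathcomp Require Import all_classical all_reals all_analysis.
Set Implicit Arguments. Unset Strict Implicit. Unset Printing Implicit Defensive.
Import Order.TTheory GRing.Theory Num.Theory.
Local Open Scope ring_scope.

(* Points of R^d are functions 'I_d -> R; points of Z^d are functions 'I_d -> int. *)

Definition enorm {R : realType} (d : nat) (v : 'I_d -> R) : R :=
  Num.sqrt (\sum_(i < d) v i ^+ 2).

Definition znorm {R : realType} (d : nat) (x : 'I_d -> int) : R :=
  enorm (fun i => (x i)%:~R).

Definition eucl_lipschitz {R : realType} (d : nat) (g : ('I_d -> R) -> R) : Prop :=
  exists L : R, forall u v, `|g u - g v| <= L * enorm (fun i => u i - v i).

Definition stepv (d : nat) (s : 'I_d * bool) : 'I_d -> int :=
  fun j => if j == s.1 then (if s.2 then 1 else -1) else 0.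

Definition endpoint (d t : nat) (w : t.-tuple ('I_d * bool)) : 'I_d -> int :=
  fun j => \sum_(s <- w) stepv s j.

(* Expectation of f(S_t) for simple symmetric random walk S on Z^d started at 0:
   the 2d^t step sequences of length t are equally likely. *)
Definition srw_expect {R : realType} (d t : nat) (f : ('I_d -> int) -> R) : R :=
  (\sum_(w : t.-tuple ('I_d * bool)) f (endpoint w)) / ((2 * d) ^ t)%:R.

Definition Geps {R : realType} (d : nat) (beta : R) (g : ('I_d -> R) -> R)
  (eps : R) (t : nat) (x : 'I_d -> int) : R :=
  srw_expect t (fun s => expR (beta * g (fun j => eps * (s j + x j)%:~R))).

From mathcomp Require Import all_boot all_order all_algebra.
From mathcomp Require Import all_classical all_reals all_analysis.
From mathcomp Require Import ring lra.
Set Implicit Arguments.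
Unset Strict Implicit.
Unset Printing Implicit Defensive.
Import Order.TTheory GRing.Theory Num.Theory.
Local Open Scope ring_scope.

(* Put c = beta * L * eps, with L a Lipschitz constant of g.  Pointwise in the walk,
   |e^a - e^b| <= |a - b| (e^a + e^b) bounds the difference of the two integrands by
   c |x - y| times their sum, and by the Lipschitz bound each integrand at S_t is at most
   e^(beta |g 0| + c d |x|) e^(c |S_t|_1) <= e^(beta |g 0| + c d |x|) prod_i 2 cosh (c S_t,i).
   That product is an eigenfunction of the transition operator of the walk with eigenvalue
   cosh c, so its expectation is 2^d (cosh c)^t <= 2^d e^(2 c^2 t). *)

Section Exponential.
Variable R : realType.
Implicit Types a b c : R.

Lemma expR_tangent_le a b : expR a * (1 + (b - a)) <= expR b.
Proof.
have -> : expR b = expR a * expR (b - a) by rewrite -expRD addrC subrK.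
by rewrite ler_wpM2l ?expR_ge0 // expR_ge1Dx.
Qed.

Lemma normr_expRB_le a b : `|expR a - expR b| <= `|a - b| * (expR a + expR b).
Proof.
wlog ba : a b / b <= a.
  move=> H; have [|/ltW] := leP b a; first exact: H.
  by move=> ab; rewrite distrC [`|a - b|]distrC [expR a + _]addrC; exact: H.
have := expR_tangent_le a b; have := expR_gt0 b.
rewrite !ger0_norm ?subr_ge0 ?ler_expR //; nra.
Qed.

Lemma expR_add_expRN_le c : expR c + expR (- c) <= 2 * expR (2 * c ^+ 2).
Proof.
wlog c0 : c / 0 <= c.
  move=> H; have [/H //|c0] := leP 0 c.
  by have := H (- c); rewrite opprK sqrrN addrC; apply; rewrite oppr_ge0 ltW.
have e2 := expR_ge1Dx (2 * c ^+ 2).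
have ecN : expR c * expR (- c) = 1 by exact: expRxMexpNx_1.
have ec1 : 1 <= expR c by rewrite -expR0 ler_expR.
have ecN_gt0 := expR_gt0 (- c).
case: (lerP c 1) => c1; last first.
  have : expR (- c) <= expR c by rewrite ler_expR; lra.
  have : expR c <= expR (2 * c ^+ 2) by rewrite ler_expR; nra.
  lra.
have ec4 : expR c <= 4.
  have -> : expR c = expR (c / 2) ^+ 2 by rewrite expr2 -expRD -splitr.
  have := expR_tangent_le (c / 2) 0; have := expR_gt0 (c / 2).
  rewrite expR0 sub0r; nra.
have ecB1 : expR c - 1 <= c * expR c by have := expR_tangent_le c 0; rewrite expR0; lra.
have sq : (expR c - 1) ^+ 2 <= (c * expR c) ^+ 2.
  by apply: lerXn2r; rewrite ?nnegrE; nra.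
have sumE : expR c + expR (- c) = 2 + (expR c - 1) ^+ 2 * expR (- c).
  rewrite expr2 !(mulrBl, mulrBr) !mul1r !mulr1 -mulrA ecN; ring.
have : (expR c - 1) ^+ 2 * expR (- c) <= c ^+ 2 * expR c.
  have -> : c ^+ 2 * expR c = (c * expR c) ^+ 2 * expR (- c).
    by rewrite exprMn [expR c ^+ 2]expr2 -!mulrA ecN mulr1.
  by rewrite ler_wpM2r // ltW.
rewrite sumE; nra.
Qed.

End Exponential.

Lemma sum_tuple_cons (T : finType) (V : nmodType) t (F : t.+1.-tuple T -> V) :
  \sum_(w : t.+1.-tuple T) F w = \sum_(s : T) \sum_(w : t.-tuple T) F [tuple of s :: w].
Proof.
rewrite pair_big /= (reindex (fun p : T * t.-tuple T => [tuple of p.1 :: p.2])) //.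
apply: onW_bij; exists (fun w => (thead w, [tuple of behead w])).
  by case=> s w; congr pair; apply: val_inj.
by move=> w; apply: val_inj; case: w => -[].
Qed.

Lemma endpoint_cons d t (s : 'I_d * bool) (w : t.-tuple ('I_d * bool)) j :
  endpoint [tuple of s :: w] j = stepv s j + endpoint w j.
Proof. by rewrite /endpoint big_cons. Qed.

Section CoshProduct.
Variables (R : realType) (d : nat).
Implicit Types (c : R) (u : int) (z : 'I_d -> int).

Definition cosh2 c u : R := expR (c * u%:~R) + expR (- (c * u%:~R)).

Definition cosh_prod c z : R := \prod_(i < d) cosh2 c (z i).

Lemma cosh2_ge0 c u : 0 <= cosh2 c u.
Proof. by rewrite addr_ge0 ?expR_ge0. Qed.

Lemma cosh2c0 c : cosh2 c 0 = 2.
Proof. by rewrite /cosh2 mulr0 oppr0 expR0. Qed.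

Lemma cosh2_shift c u : cosh2 c (u + 1) + cosh2 c (u - 1) = cosh2 c 1 * cosh2 c u.
Proof.
rewrite /cosh2 !intrD !mulrDr !opprD !expRD mulrN1z mulrN !opprK mulr1.
ring.
Qed.

Lemma expR_norm_le_cosh2 c u : expR `|c * u%:~R| <= cosh2 c u.
Proof.
have := expR_ge0 (c * u%:~R); have := expR_ge0 (- (c * u%:~R)).
by rewrite /cosh2; case: (ger0P (c * u%:~R)) => _; lra.
Qed.

Lemma cosh_prod_ge0 c z : 0 <= cosh_prod c z.
Proof. by apply: prodr_ge0 => i _; apply: cosh2_ge0. Qed.

Lemma cosh_prod0 c : cosh_prod c (fun=> 0) = 2 ^+ d.
Proof.
by rewrite /cosh_prod (eq_bigr (fun=> 2)) ?prodr_const ?card_ord // => i; rewrite cosh2c0.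
Qed.

Lemma expR_sum_norm_le_cosh_prod c z : 0 <= c ->
  expR (c * \sum_i `|(z i)%:~R : R|) <= cosh_prod c z.
Proof.
move=> c0; rewrite mulr_sumr expR_sum; apply: ler_prod => i _.
by rewrite expR_ge0 /= -[c in c * _](ger0_norm c0) -normrM expR_norm_le_cosh2.
Qed.

Lemma sum_step_cosh_prod c z :
  \sum_(s : 'I_d * bool) cosh_prod c (fun j => stepv s j + z j)
  = d%:R * cosh2 c 1 * cosh_prod c z.
Proof.
rewrite -(pair_big predT predT (fun i b => cosh_prod c (fun j => stepv (i, b) j + z j))) /=.
rewrite -mulrA mulr_natl -[d in RHS]card_ord -sumr_const; apply: eq_bigr => i _.
have prod_split (f : 'I_d -> R) : \prod_j f j = f i * \prod_(j | j != i) f j.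
  exact: bigD1.
have prod_off b : \prod_(j | j != i) cosh2 c (stepv (i, b) j + z j)
           = \prod_(j | j != i) cosh2 c (z j).
  by apply: eq_bigr => j /negPf ji; rewrite /stepv /= ji add0r.
have sum_bool (F : bool -> R) : \sum_b F b = F true + F false by rewrite big_bool.
rewrite sum_bool /cosh_prod (prod_split (fun j => cosh2 c (z j))).
rewrite (prod_split (fun j => cosh2 c (stepv (i, true) j + z j))).
rewrite (prod_split (fun j => cosh2 c (stepv (i, false) j + z j))).
rewrite (prod_off true) (prod_off false).
have -> : stepv (i, true) i = 1 by rewrite /stepv eqxx.
have -> : stepv (i, false) i = -1 by rewrite /stepv eqxx.
by rewrite -mulrDl (addrC 1) (addrC (-1)) cosh2_shift mulrA.
Qed.

Lemma sum_cosh_prod_endpoint c t z :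
  \sum_(w : t.-tuple ('I_d * bool)) cosh_prod c (fun j => endpoint w j + z j)
  = (d%:R * cosh2 c 1) ^+ t * cosh_prod c z.
Proof.
elim: t z => [|t IH] z.
  rewrite (eq_bigr (fun=> cosh_prod c z)) ?sumr_const ?card_tuple ?mul1r // => w _.
  by rewrite tuple0; congr cosh_prod; apply: funext => j; rewrite /endpoint big_nil add0r.
rewrite sum_tuple_cons.
transitivity (\sum_s \sum_(w : t.-tuple _) cosh_prod c (fun j => endpoint w j + (stepv s j + z j))).
  apply: eq_bigr => s _; apply: eq_bigr => w _; congr cosh_prod; apply: funext => j.
  by rewrite endpoint_cons addrCA addrA.
under eq_bigr do rewrite IH.
by rewrite -mulr_sumr sum_step_cosh_prod exprSr mulrA.
Qed.

Lemma srw_expect_cosh_prod c t : (0 < d)%N ->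
  srw_expect t (cosh_prod c) = (cosh2 c 1 / 2) ^+ t * 2 ^+ d.
Proof.
move=> d_gt0; rewrite /srw_expect.
have -> : \sum_(w : t.-tuple _) cosh_prod c (endpoint w)
        = (d%:R * cosh2 c 1) ^+ t * cosh_prod c (fun=> 0).
  rewrite -sum_cosh_prod_endpoint; apply: eq_bigr => w _.
  by congr cosh_prod; apply: funext => j; rewrite addr0.
have d_neq0 : d%:R != 0 :> R by rewrite pnatr_eq0 -lt0n.
rewrite cosh_prod0 natrX mulrAC -expr_div_n natrM; congr (_ ^+ _ * _).
by rewrite [2 * _]mulrC invfM mulrACA mulfV ?mul1r.
Qed.

Lemma srw_expect_cosh_prod_le c t : (0 < d)%N ->
  srw_expect t (cosh_prod c) <= 2 ^+ d * expR (2 * c ^+ 2 * t%:R).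
Proof.
move=> d_gt0; rewrite srw_expect_cosh_prod // mulrC expRM_natr.
rewrite ler_wpM2l ?exprn_ge0 // lerXn2r ?nnegrE ?expR_ge0 ?divr_ge0 ?cosh2_ge0 //.
by rewrite ler_pdivrMr // mulrC /cosh2 mulr1 expR_add_expRN_le.
Qed.

End CoshProduct.

Section Expectation.
Variables (R : realType) (d t : nat).
Implicit Types f h : ('I_d -> int) -> R.

Lemma srw_expectB f h : srw_expect t f - srw_expect t h = srw_expect t (fun s => f s - h s).
Proof. by rewrite /srw_expect -mulrBl -sumrB. Qed.

Lemma srw_expectZ (a : R) f : srw_expect t (fun s => a * f s) = a * srw_expect t f.
Proof. by rewrite /srw_expect -mulr_sumr mulrA. Qed.

Lemma norm_srw_expect_le f h :
  (forall s, `|f s| <= h s) -> `|srw_expect t f| <= srw_expect t h.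
Proof.
move=> fh; have N_ge0 : 0 <= (((2 * d) ^ t)%:R : R)^-1 by rewrite invr_ge0.
rewrite /srw_expect normrM (ger0_norm N_ge0) ler_wpM2r //.
by apply: le_trans (ler_norm_sum _ _ _) (ler_sum _ _) => w _.
Qed.

End Expectation.

Section EuclideanNorm.
Variables (R : realType) (d : nat).
Implicit Types v : 'I_d -> R.

Lemma enorm_ge0 v : 0 <= enorm v.
Proof. exact: sqrtr_ge0. Qed.

Lemma enorm_le_sum_norm v : enorm v <= \sum_i `|v i|.
Proof.
have [sq_le sum_ge0] : \sum_i v i ^+ 2 <= (\sum_i `|v i|) ^+ 2 /\ 0 <= \sum_i `|v i|.
  elim/big_ind2: _ => [|a1 a2 b1 b2 [h1 p1] [h2 p2]|i _].
  - by rewrite expr0n.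
  - split; nra.
  - by rewrite real_normK ?num_real.
by rewrite -[X in _ <= X](ger0_norm sum_ge0) -sqrtr_sqr ler_sqrt // sqr_ge0.
Qed.

Lemma normr_le_enorm v i : `|v i| <= enorm v.
Proof.
have sq_ge0 j : 0 <= v j ^+ 2 by exact: sqr_ge0.
rewrite -sqrtr_sqr ler_sqrt ?sumr_ge0 // (bigD1 i) //= lerDl sumr_ge0 //.
Qed.

Lemma enormZ (e : R) v : enorm (fun i => e * v i) = `|e| * enorm v.
Proof.
rewrite /enorm (eq_bigr (fun i => e ^+ 2 * v i ^+ 2)) => [|i _]; last by rewrite exprMn.
by rewrite -mulr_sumr sqrtrM ?sqr_ge0 // sqrtr_sqr.
Qed.

Lemma enorm_shift_le (s x : 'I_d -> int) :
  enorm (fun j => (s j + x j)%:~R) <= \sum_j `|(s j)%:~R : R| + d%:R * znorm x.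
Proof.
apply: le_trans (enorm_le_sum_norm _) _.
have -> : d%:R * znorm x = \sum_(j < d) znorm x :> R.
  by rewrite sumr_const card_ord mulr_natl.
rewrite -big_split.
apply: ler_sum => j _; rewrite intrD; apply: le_trans (ler_normD _ _) _.
by rewrite lerD2l (normr_le_enorm (fun i => (x i)%:~R)).
Qed.

End EuclideanNorm.

Section LipschitzExponential.
Variables (R : realType) (d : nat) (beta L eps : R) (g : ('I_d -> R) -> R).
Hypotheses (beta_ge0 : 0 <= beta) (L_ge0 : 0 <= L) (eps_ge0 : 0 <= eps).
Hypothesis g_lip : forall u v, `|g u - g v| <= L * enorm (fun i => u i - v i).

Let c := beta * L * eps.
Let K := expR (beta * `|g (fun=> 0)|).
Let F (x s : 'I_d -> int) := expR (beta * g (fun j => eps * (s j + x j)%:~R)).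

Lemma lipschitz_le_norm u : g u <= `|g (fun=> 0)| + L * enorm u.
Proof.
have := g_lip u (fun=> 0); rewrite (_ : (fun i => u i - 0) = u); last first.
  by apply: funext => i; rewrite subr0.
have := ler_norm (g (fun=> 0)); rewrite ler_norml => h /andP[_]; lra.
Qed.

Lemma exp_g_le_cosh_prod x s :
  F x s <= K * expR (c * d%:R * znorm x) * cosh_prod c s.
Proof.
have c_ge0 : 0 <= c by rewrite !mulr_ge0.
have arg_le : beta * g (fun j => eps * (s j + x j)%:~R)
    <= beta * `|g (fun=> 0)| + c * d%:R * znorm x + c * \sum_j `|(s j)%:~R : R|.
  apply: le_trans (ler_wpM2l beta_ge0 (lipschitz_le_norm _)) _.
  rewrite enormZ (ger0_norm eps_ge0).
  have := ler_wpM2l c_ge0 (enorm_shift_le R s x).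
  rewrite /c -!mulrA mulrDr; lra.
apply: le_trans (ler_wpM2l _ (expR_sum_norm_le_cosh_prod s c_ge0)); last first.
  by rewrite mulr_ge0 ?expR_ge0.
by rewrite /F /K -!expRD ler_expR.
Qed.

Lemma exp_g_diff_le x y s :
  `|F x s - F y s| <= c * znorm (fun i => x i - y i)
                      * (2 * K * expR (c * d%:R * (znorm x + znorm y))) * cosh_prod c s.
Proof.
have c_ge0 : 0 <= c by rewrite !mulr_ge0.
have arg_diff : `|beta * g (fun j => eps * (s j + x j)%:~R) - beta * g (fun j => eps * (s j + y j)%:~R)|
    <= c * znorm (fun i => x i - y i).
  rewrite -mulrBr normrM (ger0_norm beta_ge0) /c -!mulrA ler_wpM2l //.
  apply: le_trans (g_lip _ _) _.
  rewrite (_ : (fun i => _ - _) = fun i => eps * (x i - y i)%:~R); last first.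
    by apply: funext => i; rewrite !intrD; ring.
  by rewrite enormZ (ger0_norm eps_ge0).
set E := expR (c * d%:R * (znorm x + znorm y)).
have F_le z : c * d%:R * znorm z <= c * d%:R * (znorm x + znorm y) ->
    F z s <= K * E * cosh_prod c s.
  move=> zxy; apply: le_trans (exp_g_le_cosh_prod z s) _.
  by rewrite ler_wpM2r ?cosh_prod_ge0 // ler_wpM2l ?expR_ge0 // ler_expR.
have cd_ge0 : 0 <= c * d%:R by rewrite mulr_ge0.
have sum_le : F x s + F y s <= 2 * K * E * cosh_prod c s.
  rewrite (_ : 2 * K * E * _ = K * E * cosh_prod c s + K * E * cosh_prod c s); last by ring.
  by apply: lerD; apply: F_le; rewrite ler_wpM2l // ?lerDl ?lerDr enorm_ge0.
apply: le_trans (normr_expRB_le _ _) _.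
apply: le_trans (ler_pM (normr_ge0 _) _ arg_diff sum_le) _.
  by rewrite addr_ge0 ?expR_ge0.
by rewrite !mulrA.
Qed.

Lemma Geps_diff_le t x y : (0 < d)%N ->
  `|Geps beta g eps t x - Geps beta g eps t y|
    <= c * znorm (fun i => x i - y i) * (2 * K * expR (c * d%:R * (znorm x + znorm y)))
       * (2 ^+ d * expR (2 * c ^+ 2 * t%:R)).
Proof.
move=> d_gt0; rewrite /Geps srw_expectB.
set M := c * _ * _.
apply: le_trans (norm_srw_expect_le (h := fun s => M * cosh_prod c s) _ (exp_g_diff_le x y)) _.
rewrite srw_expectZ ler_wpM2l ?srw_expect_cosh_prod_le //.
by rewrite !mulr_ge0 ?enorm_ge0 ?expR_ge0.
Qed.

End LipschitzExponential.

Theorem lemma5p2 (R : realType) (d : nat) (beta : R) (g : ('I_d -> R) -> R) :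
  (3 <= d)%N -> 0 < beta -> eucl_lipschitz g ->
  exists C1 C2 : R, 0 < C1 /\ 0 < C2 /\
    forall (eps : R) (t : nat) (x y : 'I_d -> int), 0 < eps ->
      `|Geps beta g eps t x - Geps beta g eps t y|
        <= C1 * eps * znorm (fun i => x i - y i)
           * expR (C2 * (eps * znorm x + eps * znorm y + eps ^+ 2 * t%:R)).
Proof.
move=> d_ge3 beta_gt0 [L0 lip0].
set L := `|L0| + 1.
have L_gt0 : 0 < L by have := normr_ge0 L0; rewrite /L; lra.
have g_lip u v : `|g u - g v| <= L * enorm (fun i => u i - v i).
  apply: le_trans (lip0 u v) _; rewrite ler_wpM2r ?enorm_ge0 //.
  by have := ler_norm L0; rewrite /L; lra.
have d_gt0 : (0 < d)%N by apply: leq_trans d_ge3.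
set K := expR (beta * `|g (fun=> 0)|).
exists (beta * L * (2 * K * 2 ^+ d)), (beta * L * d%:R + 2 * (beta * L) ^+ 2).
split; first by rewrite !mulr_gt0 ?expR_gt0 ?exprn_gt0.
split; first by rewrite addr_gt0 ?mulr_gt0 ?exprn_gt0 ?ltr0n.
move=> eps t x y eps_gt0.
apply: le_trans (Geps_diff_le (ltW beta_gt0) (ltW L_gt0) (ltW eps_gt0) g_lip t x y d_gt0) _.
set a := eps * znorm x + eps * znorm y; set b := eps ^+ 2 * t%:R.
rewrite (_ : beta * L * eps * d%:R * _ = beta * L * d%:R * a); last by rewrite /a; ring.
rewrite (_ : 2 * (beta * L * eps) ^+ 2 * _ = 2 * (beta * L) ^+ 2 * b); last by rewrite /b; ring.
rewrite [leLHS](_ : _ = beta * L * (2 * K * 2 ^+ d) * eps * znorm (fun i => x i - y i)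
    * expR (beta * L * d%:R * a + 2 * (beta * L) ^+ 2 * b)); last by rewrite expRD /K; ring.
apply: ler_wpM2l; first by rewrite !mulr_ge0 ?enorm_ge0 ?expR_ge0 ?exprn_ge0 ?ltW.
rewrite ler_expR.
have a_ge0 : 0 <= a by rewrite addr_ge0 ?mulr_ge0 ?enorm_ge0 ?ltW.
have b_ge0 : 0 <= b by rewrite mulr_ge0 ?sqr_ge0.
have p_ge0 : 0 <= beta * L * d%:R by rewrite !mulr_ge0 // ltW.
have q_ge0 : 0 <= 2 * (beta * L) ^+ 2 by rewrite mulr_ge0 ?sqr_ge0.
nra.
Qed.
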